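(* Let $\theta\in\Theta$ and $\lambda\in[0,1]$. For any $\theta'\in\Theta$ with $\|\theta-\theta'\|_2\le\frac{0.1\lambda}{G}$, any $0.4\lambda$-dominant set at $\theta$ is also a $0.2\lambda$-dominant set at $\theta'$.
   Context: $\Theta\subset\mathbb{R}^n$; $\ell:\Theta\times\mathcal Z\to[0,1]$ is $G$-Lipschitz in its first argument ($|\ell(\theta,z)-\ell(\theta',z)|\le G\|\theta-\theta'\|_2$); there are $K$ distributions $\mathcal P_i$ on $\mathcal Z$ and $R_i(\theta)=\mathbb E_{z\sim\mathcal P_i}\ell(\theta,z)$. For $\mu\ge0$, a nonempty $S\subseteq[K]$ is $\mu$-dominant at $\theta$ if $\min_{i\in S}R_i(\theta)\ge R_j(\theta)+\mu$ for all $j\in[K]\setminus S$. *)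

From HB Require Import structures.
From mathcomp Require Import all_boot all_order all_algebra.
From mathcomp Require Import all_classical all_reals all_analysis.
Set Implicit Arguments. Unset Strict Implicit. Unset Printing Implicit Defensive.
Import Order.TTheory GRing.Theory Num.Theory.
Local Open Scope ring_scope.

Definition norm2 (R : realType) (n : nat) (v : 'rV[R]_n) : R :=
  Num.sqrt (\sum_(i < n) v ord0 i ^+ 2).

Definition risk (R : realType) (d : measure_display) (Z : measurableType d)
  (P : probability Z R) (n : nat) (loss : 'rV[R]_n -> Z -> R) (th : 'rV[R]_n) : R :=
  \int[P]_z loss th z.

Definition dominant (R : realType) (K : nat) (Rk : 'I_K -> R) (S : {set 'I_K}) (mu : R) : Prop :=
  (exists i, i \in S) /\ forall i j, i \in S -> j \notin S -> Rk j + mu <= Rk i.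

From HB Require Import structures.
From mathcomp Require Import all_boot all_order all_algebra.
From mathcomp Require Import all_classical all_reals all_analysis.
From mathcomp Require Import measurable_realfun lra.
Set Implicit Arguments. Unset Strict Implicit. Unset Printing Implicit Defensive.
Import Order.TTheory GRing.Theory Num.Theory.
Local Open Scope ring_scope.

(* The risks move by at most [G * |theta - theta'| <= lam/10] each, so a gap of
   [0.4 lam] between the risks inside and outside [S] shrinks by at most
   [2 * lam/10] and stays at least [0.2 lam]. *)

Section ProbabilityRintegral.
Variables (R : realType) (d : measure_display) (Z : measurableType d).
Variable P : probability Z R.

Lemma probability_integrable_bounded (f : Z -> R) (c : R) :
  measurable_fun setT f -> (forall z, `|f z| <= c) ->
  P.-integrable setT (EFin \o f).
Proof.
move=> mf fc; apply: (@le_integrable _ _ _ _ _ _ _ (EFin \o cst c)) => //.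
- exact/measurable_EFinP.
- by move=> z _ /=; rewrite lee_fin (le_trans (fc z)) ?ler_norm.
- exact: finite_measure_integrable_cst.
Qed.

Lemma probability_Rintegral_cst (c : R) : \int[P]_z c = c.
Proof.
rewrite Rintegral_cst // (_ : fine _ = 1) ?mulr1 //.
exact: (congr1 fine (probability_setT P)).
Qed.

Lemma normr_RintegralB_le (f g : Z -> R) (c : R) :
  P.-integrable setT (EFin \o f) -> P.-integrable setT (EFin \o g) ->
  (forall z, `|f z - g z| <= c) ->
  `|\int[P]_z f z - \int[P]_z g z| <= c.
Proof.
move=> intf intg fgc.
have intfg : P.-integrable setT (EFin \o (fun z => f z - g z)).
  exact: (integrableB measurableT intf intg).
rewrite -RintegralB // (le_trans (le_normr_Rintegral measurableT intfg)) //.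
rewrite -[leRHS]probability_Rintegral_cst.
apply: le_Rintegral => //.
- exact: integrable_norm.
- exact: finite_measure_integrable_cst.
Qed.

End ProbabilityRintegral.

Lemma dominant_perturb (R : realType) (K : nat) (Rk Rk' : 'I_K -> R)
    (S : {set 'I_K}) (mu nu eps : R) :
  (forall i, `|Rk i - Rk' i| <= eps) -> nu + eps *+ 2 <= mu ->
  dominant Rk S mu -> dominant Rk' S nu.
Proof.
move=> close numu [S0 gap]; split=> // i j iS jS.
move: (close i) (close j) numu (gap i j iS jS).
rewrite !ler_norml mulr2n => /andP[? ?] /andP[? ?] ? ?; lra.
Qed.

Theorem lemmaB8 (R : realType) (n K : nat) (d : measure_display) (Z : measurableType d)
  (Theta : set 'rV[R]_n) (loss : 'rV[R]_n -> Z -> R) (G : R)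
  (P : 'I_K -> probability Z R) (hG : 0 < G)
  (hmeas : forall th, Theta th -> measurable_fun setT (loss th))
  (hrange : forall th z, Theta th -> 0 <= loss th z <= 1)
  (hlip : forall th th' z, Theta th -> Theta th' ->
      `|loss th z - loss th' z| <= G * norm2 (th - th'))
  (th th' : 'rV[R]_n) (lam : R) (S : {set 'I_K}) :
  Theta th -> Theta th' -> 0 <= lam <= 1 ->
  norm2 (th - th') <= (1/10) * lam / G ->
  dominant (fun i => risk (P i) loss th) S ((4/10) * lam) ->
  dominant (fun i => risk (P i) loss th') S ((2/10) * lam).
Proof.
move=> Tth Tth' _ hnorm.
have lossG : G * norm2 (th - th') <= (1/10) * lam by rewrite mulrC -ler_pdivlMr.
have integrable_loss i t : Theta t -> (P i).-integrable setT (EFin \o loss t).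
  move=> Tt; apply: (probability_integrable_bounded (P i) (c := 1) (hmeas _ Tt)) => z.
  by have /andP[l0 l1] := hrange t z Tt; rewrite ger0_norm.
apply: (dominant_perturb (eps := (1/10) * lam)); last lra.
move=> i; apply: normr_RintegralB_le.
- exact: integrable_loss.
- exact: integrable_loss.
- by move=> z; exact: le_trans (hlip _ _ _ Tth Tth') lossG.
Qed.
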